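(* Let $\mu:R\to S$ be a crossed module of racks. Then the induced group homomorphism ${\rm As}(\mu):{\rm As}(R)\to{\rm As}(S)$, together with the action of ${\rm As}(S)$ on ${\rm As}(R)$ by group automorphisms extending the given rack action of $S$ on $R$ (i.e. $i_R(r)\cdot i_S(s)=i_R(r\cdot s)$), is a crossed module of groups. In other words, the functor ${\rm As}$ sends crossed modules of racks to crossed modules of groups.
   Context: A (right) rack is a set with a binary operation $\lhd$ such that each $x\mapsto x\lhd y$ is bijective and $(x\lhd y)\lhd z=(x\lhd z)\lhd(y\lhd z)$. An action of a rack $R$ on a set $X$ is a family of bijections $x\mapsto x\cdot r$ ($r\in R$) with $(x\cdot r)\cdot r'=(x\cdot r')\cdot(r\lhd r')$; if $X$ is a rack, it is by automorphisms if also $(x\lhd x')\cdot r=(x\cdot r)\lhd(x'\cdot r)$. A crossed module of racks is a rack morphism $\mu:R\to S$ with an action of $S$ on $R$ by automorphisms such that $\mu(r\cdot s)=\mu(r)\lhd s$ and $r\cdot\mu(r')=r\lhd r'$ for all $r,r'\in R$, $s\in S$. For a rack $R$, the associated group ${\rm As}(R)$ is the quotient of the free group on the set $R$ by the normal subgroup generated by the elements $y^{-1}x^{-1}y(x\lhd y)$, $x,y\in R$, and $i_R:R\to{\rm As}(R)$ is the canonical map; a rack morphism $\mu:R\to S$ induces a group homomorphism ${\rm As}(\mu)$ with ${\rm As}(\mu)\circ i_R=i_S\circ\mu$. For a group $G$, the conjugation rack has $g\lhd h=h^{-1}gh$. A crossed module of groups is a group homomorphism $\mu:M\to N$ together with a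 right action of $N$ on $M$ by group automorphisms such that $\mu(m\cdot n)=n^{-1}\mu(m)n$ and $m\cdot\mu(m')=(m')^{-1}mm'$ for all $m,m'\in M$, $n\in N$. *)

From mathcomp Require Import all_boot.
Set Implicit Arguments. Unset Strict Implicit. Unset Printing Implicit Defensive.

Definition is_rack (R : Type) (op : R -> R -> R) : Prop :=
  (forall y, bijective (fun x => op x y)) /\
  (forall x y z, op (op x y) z = op (op x z) (op y z)).

Definition rack_morphism (R S : Type) (opR : R -> R -> R) (opS : S -> S -> S)
  (f : R -> S) : Prop := forall x y, f (opR x y) = opS (f x) (f y).

Definition rack_action (R X : Type) (opR : R -> R -> R) (act : X -> R -> X) : Prop :=
  (forall r, bijective (fun x => act x r)) /\
  (forall x r r', act (act x r) r' = act (act x r') (opR r r')).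

Definition rack_action_by_aut (R X : Type) (opR : R -> R -> R) (opX : X -> X -> X)
  (act : X -> R -> X) : Prop :=
  rack_action opR act /\ forall x x' r, act (opX x x') r = opX (act x r) (act x' r).

Definition rack_crossed_module (R S : Type) (opR : R -> R -> R) (opS : S -> S -> S)
  (mu : R -> S) (act : R -> S -> R) : Prop :=
  is_rack opR /\ is_rack opS /\ rack_morphism opR opS mu /\
  rack_action_by_aut opS opR act /\
  (forall r s, mu (act r s) = opS (mu r) s) /\
  (forall r r', act r (mu r') = opR r r').

(* A letter (false, x) stands for the generator x, (true, x) for x^{-1}. *)
Definition word (R : Type) := seq (bool * R).

Definition gen (R : Type) (x : R) : word R := [:: (false, x)].
Definition w_inv (R : Type) (w : word R) : word R :=
  rev (map (fun l => (~~ l.1, l.2)) w).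

(* As_eq op u v : u and v represent the same element of As(R), i.e. the
   congruence on the free monoid generated by free cancellation and by the
   relators y^{-1} x^{-1} y (x <| y); the quotient is the free group on R
   modulo the normal subgroup generated by these relators. *)
Inductive As_eq (R : Type) (op : R -> R -> R) : word R -> word R -> Prop :=
| As_cancel1 u v x : As_eq op (u ++ [:: (false, x); (true, x)] ++ v) (u ++ v)
| As_cancel2 u v x : As_eq op (u ++ [:: (true, x); (false, x)] ++ v) (u ++ v)
| As_rel u v x y :
    As_eq op (u ++ [:: (true, y); (true, x); (false, y); (false, op x y)] ++ v) (u ++ v)
| As_refl u : As_eq op u u
| As_sym u v : As_eq op u v -> As_eq op v u
| As_trans u v w : As_eq op u v -> As_eq op v w -> As_eq op u w.

Definition As_map (R S : Type) (mu : R -> S) (w : word R) : word S :=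
  map (fun l => (l.1, mu l.2)) w.

(* Crossed module of groups mu : M -> N with M = As(R), N = As(S) (group law =
   concatenation, unit = [::], inverse = w_inv, equality = As_eq), where the
   homomorphism is As(mu) and alpha : M -> N -> M is the right action. *)
Definition As_group_crossed_module (R S : Type) (opR : R -> R -> R) (opS : S -> S -> S)
  (mu : R -> S) (alpha : word R -> word S -> word R) : Prop :=
      (forall m m', As_eq opR m m' -> As_eq opS (As_map mu m) (As_map mu m')) /\
      (forall m m' n n', As_eq opR m m' -> As_eq opS n n' ->
          As_eq opR (alpha m n) (alpha m' n')) /\
      (forall m, As_eq opR (alpha m [::]) m) /\
      (forall m n n', As_eq opR (alpha m (n ++ n')) (alpha (alpha m n) n')) /\
      (* by group automorphisms (endomorphisms; invertibility follows) *)
      (forall m m' n, As_eq opR (alpha (m ++ m') n) (alpha m n ++ alpha m' n)) /\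
      (forall m n, As_eq opS (As_map mu (alpha m n)) (w_inv n ++ As_map mu m ++ n)) /\
      (forall m m', As_eq opR (alpha m (As_map mu m')) (w_inv m' ++ m ++ m')).

From mathcomp Require Import all_boot.
From Stdlib Require Import ClassicalEpsilon.
Set Implicit Arguments. Unset Strict Implicit. Unset Printing Implicit Defensive.

(* A word n of As(S) acts on R by running the rack action (or its inverse)
   along its letters, and on a word of As(R) letterwise.  The rack action law
   makes this invariant under the relators of As(S), and the action being by
   rack automorphisms makes each such map a rack endomorphism of R, hence
   compatible with the relators of As(R).  Since x <| y = y^-1 x y holds in
   As, the identities mu(r . s) = mu(r) <| s and r . mu(r') = r <| r' become,
   letter by letter, the two crossed-module identities of groups. *)

Definition letter_inv (T : Type) (l : bool * T) : bool * T := (~~ l.1, l.2).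

Lemma w_inv_cons (T : Type) (l : bool * T) (w : word T) :
  w_inv (l :: w) = w_inv w ++ [:: letter_inv l].
Proof. by rewrite /w_inv /= rev_cons cats1. Qed.

Lemma As_map_id (T : Type) (m : word T) : As_map (fun x => x) m = m.
Proof. by elim: m => [|[b x] m /= ->]. Qed.

Lemma As_map_comp (T U V : Type) (f : U -> V) (g : T -> U) (m : word T) :
  As_map f (As_map g m) = As_map (f \o g) m.
Proof. by rewrite /As_map -map_comp. Qed.

Lemma eq_As_map (T U : Type) (f g : T -> U) : f =1 g -> As_map f =1 As_map g.
Proof. by move=> fg m; apply: eq_map => -[b x] /=; rewrite fg. Qed.

Lemma bijective_inverse_family (X Y : Type) (f : X -> Y -> X) :
  (forall y, bijective (f^~ y)) ->
  exists g : X -> Y -> X, (forall x y, g (f x y) y = x) /\ (forall x y, f (g x y) y = x).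
Proof.
move=> f_bij.
have inv_ex y : exists g : X -> X, cancel (f^~ y) g /\ cancel g (f^~ y).
  by case: (f_bij y) => g fK gK; exists g.
pose inv y := proj1_sig (constructive_indefinite_description _ (inv_ex y)).
have invP y := proj2_sig (constructive_indefinite_description _ (inv_ex y)).
by exists (fun x y => inv y x); split=> x y; [exact: (invP y).1|exact: (invP y).2].
Qed.

Section AsEqTheory.
Variables (T : Type) (op : T -> T -> T).

Lemma As_eq_ctx (a b u v : word T) :
  As_eq op u v -> As_eq op (a ++ u ++ b) (a ++ v ++ b).
Proof.
have E u' c v' : a ++ (u' ++ c ++ v') ++ b = (a ++ u') ++ c ++ (v' ++ b).
  by rewrite !catA.
have E0 u' v' : a ++ (u' ++ v') ++ b = (a ++ u') ++ (v' ++ b) by rewrite !catA.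
elim=> {u v} [u v x|u v x|u v x y|u|u v _ IH|u v w _ IH1 _ IH2].
- rewrite E E0; exact: As_cancel1.
- rewrite E E0; exact: As_cancel2.
- rewrite E E0; exact: As_rel.
- exact: As_refl.
- exact: As_sym.
- exact: As_trans IH2.
Qed.

Lemma As_eq_cat (u u' v v' : word T) :
  As_eq op u u' -> As_eq op v v' -> As_eq op (u ++ v) (u' ++ v').
Proof.
move=> eq_u eq_v; apply: (@As_trans _ _ _ (u' ++ v)).
  exact: (As_eq_ctx [::] v eq_u).
by have := As_eq_ctx u' [::] eq_v; rewrite !cats0.
Qed.

Lemma As_eq_letterV (l : bool * T) : As_eq op [:: l; letter_inv l] [::].
Proof.
case: l => [[] x]; [exact: (As_cancel2 op [::] [::] x)|exact: (As_cancel1 op [::] [::] x)].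
Qed.

Lemma As_eq_mulrV (w : word T) : As_eq op (w ++ w_inv w) [::].
Proof.
elim: w => [|l w IH] /=; first exact: As_refl.
rewrite w_inv_cons; apply: As_trans (As_eq_letterV l).
by have := As_eq_ctx [:: l] [:: letter_inv l] IH; rewrite /= -!catA.
Qed.

Lemma As_eq_mulVr (w : word T) : As_eq op (w_inv w ++ w) [::].
Proof.
elim: w => [|l w IH] /=; first exact: As_refl.
rewrite w_inv_cons -catA; apply: As_trans IH.
have := As_eq_ctx (w_inv w) w (As_eq_letterV (letter_inv l)).
by rewrite /letter_inv /= negbK; case: l.
Qed.

Lemma As_eq_solve_l (u v : word T) : As_eq op (u ++ v) [::] -> As_eq op u (w_inv v).
Proof.
move=> uv1; apply: (@As_trans _ _ _ ((u ++ v) ++ w_inv v)); last first.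
  exact: (As_eq_ctx [::] (w_inv v) uv1).
rewrite -catA; apply: As_sym.
by have := As_eq_ctx u [::] (As_eq_mulrV v); rewrite /= !cats0.
Qed.

Lemma As_eq_solve_r (u v : word T) : As_eq op (u ++ v) [::] -> As_eq op v (w_inv u).
Proof.
move=> uv1; apply: (@As_trans _ _ _ (w_inv u ++ (u ++ v))).
  by apply: As_sym; have := As_eq_ctx [::] v (As_eq_mulVr u); rewrite /= -catA.
by have := As_eq_ctx (w_inv u) [::] uv1; rewrite /= !cats0.
Qed.

Lemma As_eq_conjK (n v : word T) : As_eq op (n ++ (w_inv n ++ v ++ n) ++ w_inv n) v.
Proof.
have -> : n ++ (w_inv n ++ v ++ n) ++ w_inv n = (n ++ w_inv n) ++ v ++ (n ++ w_inv n).
  by rewrite !catA.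
by have := As_eq_cat (As_eq_mulrV n) (As_eq_cat (As_refl op v) (As_eq_mulrV n)); rewrite cats0.
Qed.

Lemma As_eq_conj (b : bool) (x y : T) :
  As_eq op [:: (b, op x y)] [:: (true, y); (b, x); (false, y)].
Proof.
have rel : As_eq op ([:: (true, y); (true, x); (false, y)] ++ [:: (false, op x y)]) [::].
  exact: (As_rel op [::] [::] x y).
case: b; last exact: As_eq_solve_r rel.
by apply: As_sym; exact: As_eq_solve_l rel.
Qed.

Lemma As_eq_conjV (b : bool) (x y : T) :
  As_eq op [:: (b, x)] [:: (false, y); (b, op x y); (true, y)].
Proof.
apply: As_sym; apply: As_trans (As_eq_conjK [:: (false, y)] [:: (b, x)]).
exact: (As_eq_ctx [:: (false, y)] [:: (true, y)] (As_eq_conj b x y)).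
Qed.

Lemma As_map_conj (X : Type) (f g : X -> T) (n : word T) :
  (forall b x, As_eq op [:: (b, g x)] (w_inv n ++ [:: (b, f x)] ++ n)) ->
  forall m, As_eq op (As_map g m) (w_inv n ++ As_map f m ++ n).
Proof.
move=> gf; elim=> [|[b x] m IH] /=.
  by apply: As_sym; exact: As_eq_mulVr.
apply: As_trans (As_eq_cat (gf b x) IH) _.
have := As_eq_ctx (w_inv n ++ [:: (b, f x)]) (As_map f m ++ n) (As_eq_mulrV n).
by rewrite -!catA.
Qed.

Lemma As_eq_foldl_conj (X : Type) (g : X -> T) (a : X -> bool * T -> X) :
  (forall x l b, As_eq op [:: (b, g (a x l))] [:: letter_inv l; (b, g x); l]) ->
  forall n x b, As_eq op [:: (b, g (foldl a x n))] (w_inv n ++ [:: (b, g x)] ++ n).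
Proof.
move=> ga; elim=> [|l n IH] x b /=; first exact: As_refl.
apply: As_trans (IH (a x l) b) _.
have := As_eq_ctx (w_inv n) n (ga x l b).
by rewrite w_inv_cons -!catA.
Qed.

End AsEqTheory.

Lemma As_map_As_eq (T U : Type) (opT : T -> T -> T) (opU : U -> U -> U) (f : T -> U) :
  rack_morphism opT opU f ->
  forall m m', As_eq opT m m' -> As_eq opU (As_map f m) (As_map f m').
Proof.
move=> f_morph m m'; elim=> {m m'} [u v x|u v x|u v x y|u|u v _ IH|u v w _ IH1 _ IH2].
- rewrite /As_map !map_cat /=; exact: As_cancel1.
- rewrite /As_map !map_cat /=; exact: As_cancel2.
- rewrite /As_map !map_cat /= f_morph; exact: As_rel.
- exact: As_refl.
- exact: As_sym.
- exact: As_trans IH2.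
Qed.

Section AsCrossedModule.
Variables (R S : Type) (opR : R -> R -> R) (opS : S -> S -> S).
Variables (act act_inv : R -> S -> R).
Hypothesis act_invK : forall r s, act_inv (act r s) s = r.
Hypothesis act_invKV : forall r s, act (act_inv r s) s = r.
Hypothesis act_act : forall r s s', act (act r s) s' = act (act r s') (opS s s').

Definition act_letter (r : R) (l : bool * S) : R :=
  if l.1 then act_inv r l.2 else act r l.2.

Definition act_word (r : R) (n : word S) : R := foldl act_letter r n.

Lemma act_word_cat (r : R) (n n' : word S) :
  act_word r (n ++ n') = act_word (act_word r n) n'.
Proof. exact: foldl_cat. Qed.

Lemma act_word_As_eq (n n' : word S) :
  As_eq opS n n' -> act_word^~ n =1 act_word^~ n'.
Proof.
elim=> {n n'} [u v s|u v s|u v s s'|u|u v _ IH|u v w _ IH1 _ IH2] r.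
- by rewrite !act_word_cat /= /act_letter /= act_invK.
- by rewrite !act_word_cat /= /act_letter /= act_invKV.
- by rewrite !act_word_cat /= /act_letter /= -act_act !act_invKV.
- by [].
- by rewrite IH.
- by rewrite IH1 IH2.
Qed.

Hypothesis act_op : forall r r' s, act (opR r r') s = opR (act r s) (act r' s).

Lemma act_letter_op (l : bool * S) : rack_morphism opR opR (act_letter^~ l).
Proof.
move=> x y; case: l => [[] s]; rewrite /act_letter /=; last exact: act_op.
apply: (@can_inj _ _ (act^~ s) (act_inv^~ s) (act_invK^~ s)).
by rewrite /= act_op !act_invKV.
Qed.

Lemma act_word_op (n : word S) : rack_morphism opR opR (act_word^~ n).
Proof. by elim: n => [|l n IH] x y //=; rewrite act_letter_op IH. Qed.

Variable mu : R -> S.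
Hypothesis mu_morph : rack_morphism opR opS mu.
Hypothesis mu_act : forall r s, mu (act r s) = opS (mu r) s.
Hypothesis act_mu : forall r r', act r (mu r') = opR r r'.

Lemma mu_act_letter (r : R) (l : bool * S) (b : bool) :
  As_eq opS [:: (b, mu (act_letter r l))] [:: letter_inv l; (b, mu r); l].
Proof.
case: l => [[] s]; rewrite /act_letter /=.
- rewrite -{2}(act_invKV r s) mu_act; exact: As_eq_conjV.
- rewrite mu_act; exact: As_eq_conj.
Qed.

Lemma act_letter_mu (r : R) (l : bool * R) (b : bool) :
  As_eq opR [:: (b, act_letter r (l.1, mu l.2))] [:: letter_inv l; (b, r); l].
Proof.
case: l => [[] r']; rewrite /act_letter /=.
- rewrite -{2}(act_invKV r (mu r')) act_mu; exact: As_eq_conjV.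
- rewrite act_mu; exact: As_eq_conj.
Qed.

Lemma act_word_As_map (r : R) (m : word R) :
  act_word r (As_map mu m) = foldl (fun x l => act_letter x (l.1, mu l.2)) r m.
Proof. by elim: m r => [|l m IH] r //=. Qed.

Definition As_act (m : word R) (n : word S) : word R := As_map (act_word^~ n) m.

Lemma As_act_crossed_module : As_group_crossed_module opR opS mu As_act.
Proof.
split; first exact: As_map_As_eq.
split.
  move=> m m' n n' eq_m eq_n.
  apply: As_trans (As_map_As_eq (act_word_op n) eq_m) _.
  rewrite /As_act (eq_As_map (act_word_As_eq eq_n)); exact: As_refl.
split; first by move=> m; rewrite /As_act As_map_id; exact: As_refl.
split.
  move=> m n n'; rewrite /As_act As_map_comp.
  rewrite (eq_As_map (fun r => act_word_cat r n n')); exact: As_refl.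
split; first by move=> m m' n; rewrite /As_act /As_map map_cat; exact: As_refl.
split.
  move=> m n; rewrite /As_act As_map_comp; apply: As_map_conj => b r.
  exact: As_eq_foldl_conj mu_act_letter n r b.
move=> m m'; rewrite -{2}(As_map_id m); apply: As_map_conj => b r.
rewrite /= act_word_As_map.
exact: (@As_eq_foldl_conj _ _ _ (fun x => x) _ act_letter_mu m' r b).
Qed.

End AsCrossedModule.

Theorem mainTheorem2 (R S : Type) (opR : R -> R -> R) (opS : S -> S -> S)
  (mu : R -> S) (act : R -> S -> R) :
  rack_crossed_module opR opS mu act ->
  exists alpha : word R -> word S -> word R,
    As_group_crossed_module opR opS mu alpha /\
    (* alpha extends the rack action: i_R(r) . i_S(s) = i_R(r . s) *)
    (forall r s, As_eq opR (alpha (gen r) (gen s)) (gen (act r s))).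
Proof.
move=> [_ [_ [mu_morph [[[act_bij act_act] act_op] [mu_act act_mu]]]]].
have [act_inv [act_invK act_invKV]] := bijective_inverse_family act_bij.
exists (As_act act act_inv); split; last by move=> r s; exact: As_refl.
exact: As_act_crossed_module.
Qed.
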